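(* For $m\ge2$, the class of additive valuations on $[m]$ is pointwise $2(\log_2(m-1)+1)$-approximated by the class of constraint-homogeneous valuations: for every additive valuation $v$ and every nonempty $S\subseteq[m]$ there is a constraint-homogeneous valuation $v'$ with $2(\log_2(m-1)+1)\,v'(S)\ge v(S)$ and $v'(T)\le v(T)$ for all $T\subseteq[m]$.
   Context: A valuation $v$ on $2^{[m]}$ is additive if $v(T)=\sum_{j\in T}v_j$ for nonnegative numbers $v_j$. A valuation is constraint-homogeneous with interest set $S'$ and per-unit value $\hat v\ge0$ if $v(T)=\hat v|T\cap S'|$ for all $T\subseteq[m]$. A class $V$ is pointwise $\beta$-approximated by a class $V'$ if for every $v\in V$ and every $S\subseteq[m]$ there exists $v'\in V'$ (possibly depending on $S$) with $\beta v'(S)\ge v(S)$ and $v(T)\ge v'(T)$ for all $T\subseteq[m]$. *)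

From mathcomp Require Import all_boot.
From Stdlib Require Import Reals.
Set Implicit Arguments. Unset Strict Implicit. Unset Printing Implicit Defensive.

Open Scope R_scope.

Definition log2 (x : R) : R := ln x / ln 2.

Definition valuation (m : nat) := {set 'I_m} -> R.

Definition is_additive (m : nat) (v : valuation m) : Prop :=
  exists w : 'I_m -> R, (forall j, 0 <= w j) /\
    forall T : {set 'I_m}, v T = \big[Rplus/0]_(j in T) w j.

Definition is_constraint_homogeneous (m : nat) (v : valuation m) : Prop :=
  exists (S' : {set 'I_m}) (vh : R), 0 <= vh /\
    forall T : {set 'I_m}, v T = vh * INR #|T :&: S'|.

(* Let v(T) = sum_{j in T} w_j with w >= 0, and fix a nonempty S.  For j in S
   let U_j be the set of i in S with w_i >= w_j ("upper set" of j).  Choose j*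
   maximising the potential w_j * |U_j| over S and take v'(T) = w_j* |T :&: U_j*|.
   - v' <= v: on U_j* every weight is at least w_j*, and weights are >= 0.
   - Rank bound: if w_j |U_j| <= M for every j in a set A, then
     sum_{j in A} w_j <= M * H_{|A|} (H = harmonic numbers); peel off a
     minimal-weight element, whose upper set is all of A, and induct.
     With M = v'(S) this gives v(S) <= v'(S) * H_{|S|} <= v'(S) * H_m.
   - Analytic bound: H_n <= 1 + ln n, and 1 + ln m <= 2(log2(m-1)+1) for m >= 2.
   The file proves the analytic facts on logarithms and harmonic numbers, then
   elementary facts on finite sums of reals and finite argmax, then the rank
   bound and the domination lemma, from which the theorem follows directly. *)

From HB Require Import structures.
From mathcomp Require Import all_boot.
From Stdlib Require Import Reals Lra.
Set Implicit Arguments. Unset Strict Implicit.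
Open Scope R_scope.

Lemma ln_le x y : 0 < x -> x <= y -> ln x <= ln y.
Proof.
move=> x_gt0 /Rle_lt_or_eq_dec [x_lt_y | ->]; last exact: Rle_refl.
exact/Rlt_le/ln_increasing.
Qed.

Lemma ln_le_sub1 y : 0 < y -> ln y <= y - 1.
Proof. by move=> y_gt0; have := exp_ineq1_le (ln y); rewrite exp_ln //; lra. Qed.

(* 0 < ln 2 < 1, i.e. log2 is ln scaled by a factor larger than 1. *)
Lemma ln2_bounds : 0 < ln 2 < 1.
Proof.
split; first by have := ln_lt_2; lra.
rewrite -[X in _ < X](ln_exp 1); apply: ln_increasing; first lra.
by have := exp_ineq1 1; lra.
Qed.

Lemma inv_succ_le_ln_diff x : 0 < x -> / (x + 1) <= ln (x + 1) - ln x.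
Proof.
move=> x_gt0.
have ratio_gt0 : 0 < x / (x + 1) by apply: Rdiv_lt_0_compat; lra.
have := ln_le_sub1 ratio_gt0.
rewrite /Rdiv ln_mult ?ln_Rinv; try (apply: Rinv_0_lt_compat); try lra.
have -> : x * / (x + 1) - 1 = - / (x + 1) by field; lra.
lra.
Qed.

Fixpoint harmonic (n : nat) : R :=
  if n is k.+1 then harmonic k + / INR k.+1 else 0.

Lemma harmonicS n : harmonic n.+1 = harmonic n + / INR n.+1.
Proof. by []. Qed.

Lemma harmonic_le n k : (n <= k)%nat -> harmonic n <= harmonic k.
Proof.
move=> /subnKC <-; elim: (k - n)%nat => [|d IH]; first by rewrite addn0; lra.
have : 0 < / INR (n + d).+1 by apply/Rinv_0_lt_compat/lt_0_INR/ltP.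
rewrite addnS harmonicS; lra.
Qed.

(* Comparison with the integral: H_(n+1) <= 1 + ln (n+1). *)
Lemma harmonic_le_ln n : harmonic n.+1 <= 1 + ln (INR n.+1).
Proof.
elim: n => [|n IH]; first by rewrite /= ln_1; lra.
have n1_gt0 : 0 < INR n.+1 by apply/lt_0_INR/ltP.
have := inv_succ_le_ln_diff n1_gt0.
rewrite harmonicS [INR n.+2]S_INR.
lra.
Qed.

(* For m >= 2: 1 + ln m <= 1 + ln 2 + ln (m-1) <= 2 (log2 (m-1) + 1). *)
Lemma ln_le_log2_bound m : (2 <= m)%nat ->
  1 + ln (INR m) <= 2 * (log2 (INR m - 1) + 1).
Proof.
move=> m_ge2.
have x_ge1 : 1 <= INR m - 1.
  by have := le_INR 2 m (elimT leP m_ge2); rewrite [INR 2]/=; lra.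
set x := INR m - 1 in x_ge1 *.
have [ln2_gt0 ln2_lt1] := ln2_bounds.
have lnx_ge0 : 0 <= ln x by rewrite -ln_1; apply: ln_le; lra.
have ln_m : ln (INR m) <= ln 2 + ln x.
  rewrite -ln_mult; try lra.
  by apply: ln_le; rewrite /x in x_ge1 *; lra.
have lnx_le : ln x <= log2 x.
  rewrite /log2; apply: (Rmult_le_reg_r (ln 2)) => //.
  rewrite /Rdiv Rmult_assoc Rinv_l; nra.
lra.
Qed.

Lemma harmonic_le_log2_bound m : (2 <= m)%nat ->
  harmonic m <= 2 * (log2 (INR m - 1) + 1).
Proof.
case: m => [|n] // m_ge2.
exact: Rle_trans (harmonic_le_ln n) (ln_le_log2_bound m_ge2).
Qed.

Lemma RplusA : associative Rplus.
Proof. by move=> x y z; ring. Qed.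

HB.instance Definition _ :=
  Monoid.isComLaw.Build R 0 Rplus RplusA Rplus_comm Rplus_0_l.

Lemma Rsum_le (T : finType) (P : pred T) (F G : T -> R) :
  (forall i, P i -> F i <= G i) ->
  \big[Rplus/0]_(i | P i) F i <= \big[Rplus/0]_(i | P i) G i.
Proof.
move=> F_le_G; apply: (big_ind2 Rle) => //; first exact: Rle_refl.
by move=> *; lra.
Qed.

Lemma Rsum_subset_le (T : finType) (A B : {set T}) (F : T -> R) :
  (forall i, 0 <= F i) -> A \subset B ->
  \big[Rplus/0]_(i in A) F i <= \big[Rplus/0]_(i in B) F i.
Proof.
move=> F_ge0 /subsetP AB; rewrite big_mkcond [X in _ <= X]big_mkcond.
apply: Rsum_le => i _; case: ifP => [/AB -> | _]; first exact: Rle_refl.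
by case: (i \in B); [exact: F_ge0 | exact: Rle_refl].
Qed.

Lemma Rsum_const (T : finType) (A : {set T}) (c : R) :
  \big[Rplus/0]_(i in A) c = c * INR #|A|.
Proof.
rewrite -sum1_card; elim/big_rec2: _ => [|i x n _ ->]; first by rewrite /=; ring.
by rewrite plus_INR /=; ring.
Qed.

Lemma seq_argmax (T : eqType) (f : T -> R) (a : T) (s : seq T) :
  exists2 x, x \in a :: s & forall y, y \in a :: s -> f y <= f x.
Proof.
elim: s a => [|b s IH] a.
  by exists a => [|y]; rewrite ?mem_seq1 // => /eqP ->; exact: Rle_refl.
have [x xbs x_max] := IH b.
case: (Rle_dec (f a) (f x)) => [fa_le | fa_gt].
  exists x => [|y]; first by rewrite in_cons xbs orbT.
  by rewrite in_cons => /orP [/eqP -> // | /x_max].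
exists a => [|y]; first exact: mem_head.
rewrite in_cons => /orP [/eqP -> | /x_max]; first exact: Rle_refl.
by lra.
Qed.

Lemma fin_argmax (T : finType) (f : T -> R) (A : {set T}) :
  A != set0 -> exists2 x, x \in A & forall y, y \in A -> f y <= f x.
Proof.
case/set0Pn => x0 x0A; have : x0 \in enum A by rewrite mem_enum.
case def_A: (enum A) => [|a s] // _.
have [x xs x_max] := seq_argmax f a s.
exists x => [|y yA]; first by rewrite -mem_enum def_A.
by apply: x_max; rewrite -def_A mem_enum.
Qed.

Definition Rleb (x y : R) : bool := if Rle_dec x y then true else false.

Lemma RlebP x y : reflect (x <= y) (Rleb x y).
Proof. by rewrite /Rleb; case: Rle_dec => xy; constructor. Qed.

Definition upper_set (T : finType) (w : T -> R) (A : {set T}) (j : T) :=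
  [set i in A | Rleb (w j) (w i)].

Lemma upper_set_sub (T : finType) (w : T -> R) (A : {set T}) j :
  upper_set w A j \subset A.
Proof. by apply/subsetP => i; rewrite inE => /andP[]. Qed.

Lemma upper_setS (T : finType) (w : T -> R) (A B : {set T}) j :
  A \subset B -> upper_set w A j \subset upper_set w B j.
Proof.
move=> /subsetP AB; apply/subsetP => i; rewrite !inE => /andP[/AB -> ->].
by [].
Qed.

Lemma upper_set_min (T : finType) (w : T -> R) (A : {set T}) j :
  (forall i, i \in A -> w j <= w i) -> upper_set w A j = A.
Proof.
move=> j_min; apply/setP => i; rewrite inE.
by case iA: (i \in A) => //=; apply/RlebP/j_min.
Qed.

(* Induction on #|A|, removing a
   minimal-weight element j0, for which the hypothesis reads w j0 * #|A| <= M. *)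
Lemma sum_le_rank_bound (T : finType) (w : T -> R) (M : R) :
  (forall i, 0 <= w i) -> forall A : {set T},
  (forall j, j \in A -> w j * INR #|upper_set w A j| <= M) ->
  \big[Rplus/0]_(j in A) w j <= M * harmonic #|A|.
Proof.
move=> w_ge0 A; move def_n: #|A| => n; elim: n A def_n => [|n IH] A cardA bound.
  by rewrite (cards0_eq cardA) big_set0 /= Rmult_0_r; exact: Rle_refl.
have A_neq0 : A != set0 by apply/eqP => A0; rewrite A0 cards0 in cardA.
have [j0 j0A j0_min] := fin_argmax (fun j => - w j) A_neq0.
have card_rest : #|A :\ j0| = n.
  by move: cardA; rewrite (cardsD1 j0) j0A add1n => -[].
have rest_bound : \big[Rplus/0]_(j in A :\ j0) w j <= M * harmonic n.
  apply: IH card_rest _ => j; rewrite in_setD1 => /andP[_ jA].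
  apply: Rle_trans (bound j jA); apply: Rmult_le_compat_l (w_ge0 j) _.
  by apply/le_INR/leP/subset_leq_card/upper_setS/subD1set.
have j0_bound : w j0 * INR n.+1 <= M.
  have upper_j0 : upper_set w A j0 = A by apply: upper_set_min => i /j0_min; lra.
  by have := bound j0 j0A; rewrite upper_j0 cardA.
have n1_gt0 : 0 < INR n.+1 by apply/lt_0_INR/ltP.
have w_j0 : w j0 <= M * / INR n.+1.
  apply: (Rmult_le_reg_r (INR n.+1)) => //.
  by rewrite Rmult_assoc Rinv_l; lra.
rewrite (big_setD1 j0 j0A) harmonicS Rmult_plus_distr_l [X in X <= _]Rplus_comm.
exact: Rplus_le_compat.
Qed.

Lemma homogeneous_le_additive (T : finType) (w : T -> R) (B C : {set T}) c :
  (forall i, 0 <= w i) -> (forall i, i \in B -> c <= w i) ->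
  c * INR #|C :&: B| <= \big[Rplus/0]_(i in C) w i.
Proof.
move=> w_ge0 c_le; rewrite -Rsum_const.
apply: Rle_trans (Rsum_subset_le w_ge0 (subsetIl C B)).
by apply: Rsum_le => i /setIP[_ /c_le].
Qed.

(* The interest set is the upper set of the element of maximal potential. *)
Theorem mainTheorem12 (m : nat) (hm : (2 <= m)%nat) (v : valuation m)
  (hv : is_additive v) (S : {set 'I_m}) (hS : S != set0) :
  exists v' : valuation m, is_constraint_homogeneous v' /\
    2 * (log2 (INR m - 1) + 1) * v' S >= v S /\
    forall T : {set 'I_m}, v' T <= v T.
Proof.
case: hv => w [w_ge0 v_sum].
pose potential j := w j * INR #|upper_set w S j|.
have [js jsS js_max] := fin_argmax potential hS.
pose S' := upper_set w S js.
exists (fun T => w js * INR #|T :&: S'|); split; [|split].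
- by exists S', (w js); split.
- have potential_ge0 : 0 <= potential js by apply/Rmult_le_pos/pos_INR.
  have harmonic_bound : harmonic #|S| <= 2 * (log2 (INR m - 1) + 1).
    apply: Rle_trans (harmonic_le_log2_bound hm).
    by apply: harmonic_le; rewrite -[X in (_ <= X)%nat]card_ord max_card.
  rewrite (setIidPr (upper_set_sub w S js)) v_sum Rmult_comm; apply: Rle_ge.
  apply: Rle_trans (sum_le_rank_bound w_ge0 js_max) _.
  exact: Rmult_le_compat_l.
- move=> T; rewrite v_sum; apply: homogeneous_le_additive => // i.
  by rewrite inE => /andP[_ /RlebP].
Qed.
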